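(* Let $p$ be an odd prime and let $G$ be a finite $p$-group with cyclic derived subgroup $G'$. Then every conjugacy class of $G$ is a coset $Kg$ of some subgroup $K\subseteq G'$. *)

From mathcomp Require Import all_boot all_fingroup all_solvable.

From mathcomp Require Import all_boot all_fingroup all_solvable.
From mathcomp Require Import zify.

Set Implicit Arguments.
Unset Strict Implicit.
Unset Printing Implicit Defensive.

(* Fix x in G.  Since x ^ g = x * [~ x, g], the class x ^: G is x times the
   set of commutators [~ x, g], g in G.  All these commutators lie in the
   cyclic p-group G', whose subgroups form a chain, so they all lie in the
   cyclic group U = <[ [~ x, g0] ]> generated by a commutator of maximal
   order.  Conversely every power of [~ x, a] is again a commutator [~ x, h]:
   conjugation by an element of G acts on any w in G' as w |-> w ^+ r with
   r = 1 mod p, hence [~ x, a ^+ j] = [~ x, a] ^+ (1 + r + ... + r ^ (j-1)),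
   and for j = p this exponent is p times a unit mod p because p is odd.
   A Hensel-like induction on i then corrects any power [~ x, a] ^+ k by a
   commutator modulo <[ [~ x, a ^+ (p ^ i)] ]>, which is trivial for large i.
   So the commutators of x are exactly U, and x ^: G = U :* x. *)

Fixpoint geom_sum (r j : nat) : nat :=
  if j is j'.+1 then 1 + r * geom_sum r j' else 0.

Lemma geom_sum_mod p t j : exists m, geom_sum (1 + p * t) j = j + p * m.
Proof.
elim: j => [|j [m IH]]; first by exists 0; rewrite /= muln0.
by exists (m + t * j + p * t * m); rewrite /= IH; nia.
Qed.

Lemma geom_sum_mod_sq p t j :
  exists m, geom_sum (1 + p * t) j = j + p * t * 'C(j, 2) + p * p * m.
Proof.
elim: j => [|j [m IH]]; first by exists 0; rewrite /= !muln0.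
exists (m + t * t * 'C(j, 2) + p * t * m); rewrite /= IH binS bin1; nia.
Qed.

(* For p an odd prime, the sum of length p is exactly divisible by p once:
   p divides 'C(p, 2) because p is odd. *)
Lemma geom_sum_prime p t :
  prime p -> odd p -> exists m, geom_sum (1 + p * t) p = p * m /\ coprime m p.
Proof.
move=> p_pr p_odd; have [m ->] := geom_sum_mod_sq p t p.
rewrite bin2odd //; exists (1 + p * (t * p.-1./2 + m)); split; first by nia.
rewrite -coprime_modl addnC mulnC modnMDl modn_small ?prime_gt1 //.
exact: coprime1n.
Qed.

Lemma fermat_little_pow r p b : prime p -> r ^ (p ^ b) = r %[mod p].
Proof.
move=> p_pr; elim: b => [|b IH]; first by rewrite expn1.
by rewrite expnSr expnM -modnXm IH modnXm fermat_little.
Qed.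

Local Open Scope group_scope.

Section PowerConjugation.

Variable gT : finGroupType.
Implicit Types (G : {group gT}) (x g a w : gT).

Lemma commgX_geom x g r :
  [~ x, g] ^ g = [~ x, g] ^+ r ->
  forall j, [~ x, g ^+ j] = [~ x, g] ^+ geom_sum r j.
Proof.
move=> conj_r; elim=> [|j IH]; first by rewrite expg0 commg1.
by rewrite expgSr commgMJ IH conjXg conj_r -expgM /= add1n expgS.
Qed.

(* A p-element normalizing the cyclic p-group <[w]> acts on it as a power
   map w |-> w ^+ r with r = 1 mod p: indeed r ^ #[a] = 1 mod #[w], and
   r ^ (p ^ b) = r mod p by Fermat. *)
Lemma conj_cycle_one_mod p a w :
  prime p -> p.-elt a -> p.-elt w -> a \in 'N(<[w]>) ->
  exists t, w ^ a = w ^+ (1 + p * t).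
Proof.
move=> p_pr pa pw nwa.
have /cycleP[r Er] : w ^ a \in <[w]> by rewrite memJ_norm ?cycle_id.
have [[|e] oW] := p_natP pw.
  have -> : w = 1 by apply/eqP; rewrite -order_eq1 oW.
  by exists 0; rewrite conj1g expg1n.
have [b oA] := p_natP pa.
have conjX k : w ^ (a ^+ k) = w ^+ (r ^ k).
  elim: k => [|k IH]; first by rewrite conjg1 expn0 expg1.
  by rewrite expgSr conjgM IH conjXg Er -expgM expnSr mulnC.
have : w ^+ (r ^ #[a]) == w ^+ 1 by rewrite -conjX expg_order conjg1 expg1.
rewrite eq_expg_mod_order oW => /eqP r_order.
have r_mod_p : (r %% p = 1)%N.
  have p_dvd : p %| p ^ e.+1 by rewrite expnS dvdn_mulr.
  have := congr1 (modn^~ p) r_order; rewrite /= !(modn_dvdm _ p_dvd).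
  by rewrite oA fermat_little_pow // (modn_small (prime_gt1 p_pr)).
by exists (r %/ p); rewrite Er {1}(divn_eq r p) r_mod_p addnC mulnC.
Qed.

Lemma cycle_der_normal G w :
  cyclic G^`(1) -> w \in G^`(1) -> G \subset 'N(<[w]>).
Proof.
move=> cG' wG'; have chW : <[w]> \char G.
  by apply: char_trans (der_char 1 G); rewrite sub_cyclic_char // cycle_subG.
exact: normal_norm (char_normal chW).
Qed.

Lemma conj_der_one_mod G p a w :
  prime p -> p.-group G -> cyclic G^`(1) -> a \in G -> w \in G^`(1) ->
  exists t, w ^ a = w ^+ (1 + p * t).
Proof.
move=> p_pr pG cG' aG wG'; apply: conj_cycle_one_mod p_pr _ _ _.
- exact: mem_p_elt pG aG.
- exact: mem_p_elt pG (subsetP (der_sub 1 G) w wG').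
- exact: subsetP (cycle_der_normal cG' wG') a aG.
Qed.

Lemma class_rcoset (G K : {set gT}) x :
  x \in 'N(K) -> (forall g, g \in G -> [~ x, g] \in K) ->
  (forall k, k \in K -> exists2 g, g \in G & k = [~ x, g]) ->
  x ^: G = K :* x.
Proof.
move=> nKx commK K_comm; apply/setP => y; rewrite mem_rcoset.
have -> : (y * x^-1 \in K) = (x^-1 * y \in K).
  by rewrite -(memJ_norm (x^-1 * y) (groupVr nKx)) conjgE invgK mulgA mulKVg.
apply/imsetP/idP => [[g gG ->] | /K_comm[g gG Eg]].
  by rewrite conjg_mulR mulKg commK.
by exists g => //; rewrite conjg_mulR -Eg mulKVg.
Qed.

End PowerConjugation.

Section CommutatorsOfAnElement.

Variables (gT : finGroupType) (G : {group gT}) (p : nat) (x : gT).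
Hypotheses (p_pr : prime p) (p_odd : odd p) (pG : p.-group G).
Hypotheses (cG' : cyclic G^`(1)) (xG : x \in G).

Lemma comm_der g : g \in G -> [~ x, g] \in G^`(1).
Proof. by move=> gG; rewrite derg1 mem_commg. Qed.

(* The commutators of x all lie in the cyclic group generated by one of
   them of maximal order, since subgroups of the cyclic group G' are
   determined by, and ordered like, their orders. *)
Lemma comm_in_max_cycle :
  exists2 g0, g0 \in G & forall g, g \in G -> [~ x, g] \in <[ [~ x, g0] ]>.
Proof.
have [g0 g0G max_g0] := @arg_maxnP _ 1 (mem G) (fun g => #[[~ x, g]]) (group1 G).
exists g0 => // g gG.
have order_p y : y \in G^`(1) -> {k | #[y] = (p ^ k)%N}.
  by move=> yG'; apply: p_natP (mem_p_elt pG (subsetP (der_sub 1 G) y yG')).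
rewrite -cycle_subG -(cardSg_cyclic cG') ?cycle_subG ?comm_der // -!orderE.
have [k1 E1] := order_p _ (comm_der gG); have [k2 E2] := order_p _ (comm_der g0G).
rewrite E1 E2 dvdn_exp2l // -(leq_exp2l _ _ (prime_gt1 p_pr)) -E1 -E2.
exact: max_g0.
Qed.

Lemma comm_expp a : a \in G -> [~ x, a] ^+ p \in <[ [~ x, a ^+ p] ]>.
Proof.
move=> aG; have [t Et] := conj_der_one_mod p_pr pG cG' aG (comm_der aG).
have [m [Em m_coprime]] := geom_sum_prime t p_pr p_odd.
have -> : [~ x, a ^+ p] = ([~ x, a] ^+ p) ^+ m.
  by rewrite (commgX_geom Et) Em expgM.
have [k Ek] := p_natP (mem_p_elt pG (subsetP (der_sub 1 G) _ (groupX p (comm_der aG)))).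
have : generator <[ [~ x, a] ^+ p ]> (([~ x, a] ^+ p) ^+ m).
  by rewrite generator_coprime Ek coprimeXl // coprime_sym.
by move/eqP <-; apply: cycle_id.
Qed.

Lemma comm_approx a : a \in G -> forall i k,
  exists2 h, h \in G & [~ x, h]^-1 * [~ x, a] ^+ k \in <[ [~ x, a ^+ (p ^ i)] ]>.
Proof.
move=> aG; elim=> [|i IH] k.
  by exists 1; rewrite ?group1 // commg1 invg1 mul1g expn0 expg1 mem_cycle.
have [h hG /cycleP[c Ec]] := IH k.
have bG : a ^+ (p ^ i) \in G by rewrite groupX.
have [t Et] := conj_der_one_mod p_pr pG cG' bG (comm_der bG).
have [rho Erho] := conj_der_one_mod p_pr pG cG' hG (comm_der bG).
have [m Em] := geom_sum_mod p t c.
exists ((a ^+ (p ^ i)) ^+ c * h); first by rewrite groupM ?groupX.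
rewrite commgMJ (commgX_geom Et) Em conjXg Erho -expgM.
have -> : ((1 + p * rho) * (c + p * m) = c + p * (m + rho * c + p * rho * m))%N.
  by nia.
rewrite expgD invMg -mulgA Ec invMg -mulgA mulVg mulg1 groupV expgM groupX //.
by rewrite expnSr expgM comm_expp.
Qed.

Lemma comm_expg a k : a \in G -> exists2 h, h \in G & [~ x, a] ^+ k = [~ x, h].
Proof.
move=> aG; have [b ob] := p_natP (mem_p_elt pG aG).
have [h hG] := comm_approx aG b k.
rewrite -ob expg_order commg1 => /cycleP[n]; rewrite expg1n => En.
by exists h => //; rewrite -(mulKVg [~ x, h] ([~ x, a] ^+ k)) En mulg1.
Qed.

End CommutatorsOfAnElement.

Theorem mainTheorem4 (gT : finGroupType) (G : {group gT}) (p : nat) :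
  prime p -> odd p -> p.-group G -> cyclic G^`(1) ->
  forall x, x \in G ->
    exists (K : {group gT}) (g : gT), K \subset G^`(1) /\ x ^: G = K :* g.
Proof.
move=> p_pr p_odd pG cG' x xG.
have [g0 g0G commU] := comm_in_max_cycle p_pr pG cG' xG.
have U_der : [~ x, g0] \in G^`(1) by apply: comm_der.
exists <[ [~ x, g0] ]>%G, x; split; first by rewrite cycle_subG.
apply: class_rcoset commU _.
  exact: subsetP (cycle_der_normal cG' U_der) x xG.
by move=> _ /cycleP[k ->]; apply: (comm_expg p_pr p_odd pG cG' xG).
Qed.
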